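(* Let $B$ and $H$ be bialgebras over a field $\mathbb{k}$ and $\langle-,-\rangle\colon B\otimes H\to\mathbb{k}$ a Hopf (bialgebra) pairing. (i) Let $I\subset B$ be a coideal and $K_H$ a set of algebra generators of $H$. If $\langle i,h\rangle=0$ for all $i\in I$ and $h\in K_H$, then $\langle i,h\rangle=0$ for all $i\in I$ and $h\in H$. (ii) Let $I\subset B$ be a biideal, $K_I\subset I$ a set of generators of $I$ as an ideal, and $K_H$ a set of generators of $H$ as an algebra. If $\langle i,h\rangle=0$ for all $i\in K_I$ and $h\in K_H$, and moreover $\Delta^2(h)\in H\otimes\mathrm{Span}_{\mathbb{k}}(K_H\cup\{1\})\otimes H$ for all $h\in K_H$, then $\langle i,h\rangle=0$ for all $i\in I$ and $h\in H$.
   Context: A Hopf (bialgebra) pairing $\langle-,-\rangle\colon B\otimes H\to\mathbb{k}$ is a bilinear form (not necessarily nondegenerate) with $\langle\Delta_B(b),h\otimes k\rangle=\langle b,hk\rangle$, $\langle b,1_H\rangle=\epsilon_B(b)$, $\langle b\otimes c,\Delta_H(h)\rangle=\langle bc,h\rangle$, $\langle 1_B,h\rangle=\epsilon_H(h)$, where pairings of tensor products are taken componentwise. A coideal $I\subset B$ is a subspace with $\Delta(I)\subset I\otimes B+B\otimes I$ and $\epsilon(I)=0$; a biideal is an ideal that is also a coideal. $\Delta^2=(\mathrm{id}\otimes\Delta)\circ\Delta\colon H\to H^{\otimes 3}$. *)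

(* Bialgebras over a field k, with tensors represented by
   finite lists of simple tensors; equality of tensors is tested against all
   bilinear (resp. trilinear) forms, which over a field characterises equality
   in V (x) W (resp. U (x) V (x) W). *)
From mathcomp Require Import all_boot all_order all_algebra.
Set Implicit Arguments.
Unset Strict Implicit.
Unset Printing Implicit Defensive.
Import GRing.Theory.
Local Open Scope ring_scope.

Section Tensors.
Variable k : fieldType.

Definition bilinear_form (V W : lmodType k) (phi : V -> W -> k) : Prop :=
  (forall (a : k) x x' y, phi (a *: x + x') y = a * phi x y + phi x' y) /\
  (forall (a : k) x y y', phi x (a *: y + y') = a * phi x y + phi x y').

Definition trilinear_form (U V W : lmodType k) (phi : U -> V -> W -> k) : Prop :=
  (forall (a : k) x x' y z, phi (a *: x + x') y z = a * phi x y z + phi x' y z) /\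
  (forall (a : k) x y y' z, phi x (a *: y + y') z = a * phi x y z + phi x y' z) /\
  (forall (a : k) x y z z', phi x y (a *: z + z') = a * phi x y z + phi x y z').

Definition tensor2 (V W : lmodType k) := seq (V * W).
Definition tensor3 (U V W : lmodType k) := seq (U * V * W).

Definition teq2 (V W : lmodType k) (t t' : tensor2 V W) : Prop :=
  forall phi : V -> W -> k, bilinear_form phi ->
    \sum_(p <- t) phi p.1 p.2 = \sum_(p <- t') phi p.1 p.2.

Definition teq3 (U V W : lmodType k) (t t' : tensor3 U V W) : Prop :=
  forall phi : U -> V -> W -> k, trilinear_form phi ->
    \sum_(p <- t) phi p.1.1 p.1.2 p.2 = \sum_(p <- t') phi p.1.1 p.1.2 p.2.

Definition span_of (V : lmodType k) (S : V -> Prop) (x : V) : Prop :=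
  exists l : seq (k * V), (forall p, p \in l -> S p.2) /\
                          \sum_(p <- l) p.1 *: p.2 = x.

Definition subspace (V : lmodType k) (S : V -> Prop) : Prop :=
  S 0 /\ forall (a : k) x y, S x -> S y -> S (a *: x + y).

End Tensors.

Section Bialgebra.
Variable k : fieldType.
Variable B : algType k.
Variable Delta : B -> tensor2 B B.
Variable eps : B -> k.

(* (id (x) Delta) o Delta *)
Definition Delta2 (x : B) : tensor3 B B B :=
  [seq (p.1, q.1, q.2) | p <- Delta x, q <- Delta p.2].

(* (Delta (x) id) o Delta *)
Definition Delta2' (x : B) : tensor3 B B B :=
  [seq (q.1, q.2, p.2) | p <- Delta x, q <- Delta p.1].

Definition is_bialgebra : Prop :=
  (forall (a : k) x y, teq2 (Delta (a *: x + y))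
                          ([seq (a *: p.1, p.2) | p <- Delta x] ++ Delta y)) /\
  (forall (a : k) x y, eps (a *: x + y) = a * eps x + eps y) /\
  (forall x, teq3 (Delta2' x) (Delta2 x)) /\
  (forall x, \sum_(p <- Delta x) eps p.1 *: p.2 = x) /\
  (forall x, \sum_(p <- Delta x) eps p.2 *: p.1 = x) /\
  (forall x y, teq2 (Delta (x * y))
                    [seq (p.1 * q.1, p.2 * q.2) | p <- Delta x, q <- Delta y]) /\
  teq2 (Delta 1) [:: (1, 1)] /\
  (forall x y, eps (x * y) = eps x * eps y) /\
  eps 1 = 1.

Definition is_coideal (I : B -> Prop) : Prop :=
  subspace I /\
  forall i, I i ->
    eps i = 0 /\
    exists t1 t2 : tensor2 B B,
      (forall p, p \in t1 -> I p.1) /\ (forall p, p \in t2 -> I p.2) /\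
      teq2 (Delta i) (t1 ++ t2).

Definition is_ideal (I : B -> Prop) : Prop :=
  subspace I /\ forall x i, I i -> I (x * i) /\ I (i * x).

Definition is_biideal (I : B -> Prop) : Prop := is_ideal I /\ is_coideal I.

Definition is_subalgebra (S : B -> Prop) : Prop :=
  subspace S /\ S 1 /\ forall x y, S x -> S y -> S (x * y).

Definition algebra_generators (K : B -> Prop) : Prop :=
  forall S, is_subalgebra S -> (forall x, K x -> S x) -> forall x, S x.

Definition ideal_generators (K I : B -> Prop) : Prop :=
  (forall x, K x -> I x) /\
  forall J, is_ideal J -> (forall x, K x -> J x) -> forall x, I x -> J x.

End Bialgebra.

Definition is_hopf_pairing (k : fieldType) (B H : algType k)
  (DB : B -> tensor2 B B) (eB : B -> k) (DH : H -> tensor2 H H) (eH : H -> k)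
  (pair : B -> H -> k) : Prop :=
  bilinear_form pair /\
  (forall b h h', \sum_(p <- DB b) pair p.1 h * pair p.2 h' = pair b (h * h')) /\
  (forall b, pair b 1 = eB b) /\
  (forall b c h, \sum_(p <- DH h) pair b p.1 * pair c p.2 = pair (b * c) h) /\
  (forall h, pair 1 h = eH h).

Definition in_H_span_H (k : fieldType) (H : algType k) (S : H -> Prop)
  (t : tensor3 H H H) : Prop :=
  exists t' : tensor3 H H H,
    (forall p, p \in t' -> span_of S p.1.2) /\ teq3 t t'.

(** The annihilator of a coideal [I] in [H] is a subalgebra: [<i, 1> = eps i
    = 0], and [<i, h h'> = sum <i1, h> <i2, h'>] where every term of
    [Delta i] has a tensor leg in [I]; containing [K_H], it is all of [H].
    For (ii) it then suffices that [J = {b in I | <b, K_H> = 0}] is all of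
    [I].  It contains [K_I], and it is an ideal: [<x j y, h>] is
    [sum <x, h1> <j, h2> <y, h3>] over [Delta^2 h], and for [h] in [K_H] the
    middle legs lie in [Span (K_H + 1)], on which [<j, ->] vanishes because
    [eps (I) = 0]. *)
From mathcomp Require Import all_boot all_order all_algebra.
From mathcomp Require Import ring.
Import GRing.Theory.
Local Open Scope ring_scope.
Set Implicit Arguments.
Unset Strict Implicit.

Section LinearForms.
Variables (k : fieldType) (V : lmodType k).

Lemma scalar0 (f : V -> k) : scalar f -> f 0 = 0.
Proof. by move=> Lf; rewrite -(subrr 0) (zmod_morphism_linear Lf) subrr. Qed.

Lemma scalar_span_eq0 (f : V -> k) (S : V -> Prop) x :
  scalar f -> (forall s, S s -> f s = 0) -> span_of S x -> f x = 0.
Proof.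
move=> Lf fS [l [lS <-]]; rewrite big_seq.
apply: (big_ind (fun y => f y = 0)) => [|y z fy fz|p /lS Sp].
- exact: scalar0.
- by rewrite -[y]scale1r Lf fy fz mulr0 addr0.
- by rewrite -[_ *: _]addr0 Lf fS // (scalar0 Lf) mulr0 addr0.
Qed.

Lemma subspace_common_zeros (T : Type) (P : T -> Prop) (f : T -> V -> k) :
  (forall t, scalar (f t)) -> subspace (fun x => forall t, P t -> f t x = 0).
Proof.
move=> Lf; split=> [t _|a x y fx fy t Pt]; first exact: scalar0.
by rewrite Lf fx // fy // mulr0 addr0.
Qed.

Lemma subspaceI (S1 S2 : V -> Prop) :
  subspace S1 -> subspace S2 -> subspace (fun x => S1 x /\ S2 x).
Proof.
move=> [S1_0 S1D] [S2_0 S2D]; split=> // a x y [? ?] [? ?].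
by split; [apply: S1D | apply: S2D].
Qed.

End LinearForms.

Section HopfPairing.
Variables (k : fieldType) (B H : algType k).
Variables (DB : B -> tensor2 B B) (eB : B -> k).
Variables (DH : H -> tensor2 H H) (eH : H -> k).
Variable pair : B -> H -> k.
Hypothesis pairing : is_hopf_pairing DB eB DH eH pair.

Definition annihB (S : H -> Prop) (b : B) : Prop :=
  forall h, S h -> pair b h = 0.
Definition annihH (I : B -> Prop) (h : H) : Prop :=
  forall i, I i -> pair i h = 0.

Lemma pair_scalarl h : scalar (pair^~ h).
Proof. by case: pairing => [[Ll _] _] a x y; apply: Ll. Qed.

Lemma pair_scalarr b : scalar (pair b).
Proof. by case: pairing => [[_ Lr] _] a x y; apply: Lr. Qed.

Lemma pair_mulr b h h' :
  pair b (h * h') = \sum_(p <- DB b) pair p.1 h * pair p.2 h'.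
Proof. by case: pairing => [_ [mulP _]]; rewrite mulP. Qed.

Lemma pair1r b : pair b 1 = eB b.
Proof. by case: pairing => [_ [_ [unitP _]]]. Qed.

Lemma pair_mull b c h :
  pair (b * c) h = \sum_(p <- DH h) pair b p.1 * pair c p.2.
Proof. by case: pairing => [_ [_ [_ [mulP _]]]]; rewrite mulP. Qed.

Lemma pair_mul3l x j y h :
  pair (x * (j * y)) h =
  \sum_(p <- Delta2 DH h) pair x p.1.1 * pair j p.1.2 * pair y p.2.
Proof.
rewrite pair_mull /Delta2 big_allpairs_dep /=; apply: eq_bigr => p _.
by rewrite pair_mull big_distrr; apply: eq_bigr => q _; rewrite /= mulrA.
Qed.

Lemma annihB_subspace S : subspace (annihB S).
Proof.
exact: (subspace_common_zeros S (f := fun h b => pair b h) pair_scalarl).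
Qed.

Lemma annihH_subspace I : subspace (annihH I).
Proof. exact: (subspace_common_zeros I (f := pair) pair_scalarr). Qed.

Lemma coideal_annihH_subalgebra I :
  is_coideal DB eB I -> is_subalgebra (annihH I).
Proof.
move=> [_ coI]; split; first exact: annihH_subspace.
split=> [i Ii|h h' Ih Ih' i Ii]; first by rewrite pair1r; case: (coI i Ii).
have [_ [t1 [t2 [t1I [t2I DBi]]]]] := coI i Ii.
rewrite pair_mulr (DBi (fun u v => pair u h * pair v h')); last first.
  by split=> *; rewrite ?pair_scalarl ?pair_scalarr; ring.
rewrite big_cat /= !big1_seq ?addr0 // => p /andP[_ pI].
- by rewrite (Ih' _ (t2I _ pI)) mulr0.
- by rewrite (Ih _ (t1I _ pI)) mul0r.
Qed.

Lemma coideal_pair_eq0 I KH :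
  is_coideal DB eB I -> algebra_generators KH ->
  (forall i h, I i -> KH h -> pair i h = 0) ->
  forall i h, I i -> pair i h = 0.
Proof.
move=> coI genKH IKH i h Ii.
suff: annihH I h by apply.
apply: genKH => [|h' KHh' j Ij]; last exact: IKH.
exact: coideal_annihH_subalgebra.
Qed.

Lemma pair_mul3l_eq0 S x j y h :
  annihB S j -> in_H_span_H S (Delta2 DH h) -> pair (x * (j * y)) h = 0.
Proof.
move=> jS [t [tS Dh]]; rewrite pair_mul3l.
rewrite (Dh (fun a b c => pair x a * pair j b * pair y c)); last first.
  by split; [|split] => *; rewrite ?pair_scalarl ?pair_scalarr; ring.
rewrite big1_seq // => p /andP[_ /tS p_span].
by rewrite (scalar_span_eq0 (pair_scalarr j) jS p_span) mulr0 mul0r.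
Qed.

Lemma idealI_annihB I KH :
  is_ideal I -> (forall i, I i -> eB i = 0) ->
  (forall h, KH h -> in_H_span_H (fun x => KH x \/ x = 1) (Delta2 DH h)) ->
  is_ideal (fun b => I b /\ annihB KH b).
Proof.
move=> [subI idI] eI DH_KH.
have J_mul3 x j y :
    I j -> annihB KH j -> I (x * (j * y)) /\ annihB KH (x * (j * y)).
  move=> Ij jKH; split; first by case: (idI x (j * y) (proj2 (idI y j Ij))).
  move=> h KHh; apply: pair_mul3l_eq0 (DH_KH h KHh).
  by move=> s [/jKH // | ->]; rewrite pair1r eI.
split; first exact: subspaceI (annihB_subspace KH).
move=> x j [Ij jKH]; split.
- by rewrite -[x * j]mulr1 -mulrA; apply: J_mul3.
- by rewrite -[j * x]mul1r; apply: J_mul3.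
Qed.

Lemma biideal_pair_eq0 I KI KH :
  is_biideal DB eB I -> ideal_generators KI I -> algebra_generators KH ->
  (forall i h, KI i -> KH h -> pair i h = 0) ->
  (forall h, KH h -> in_H_span_H (fun x => KH x \/ x = 1) (Delta2 DH h)) ->
  forall i h, I i -> pair i h = 0.
Proof.
move=> [idI coI] [KI_I genKI] genKH KIKH DH_KH.
have eI i : I i -> eB i = 0 by move=> Ii; case: coI => _ /(_ i Ii) [].
apply: coideal_pair_eq0 coI genKH _ => i h Ii.
suff [_ iKH] : I i /\ annihB KH i by apply: iKH.
apply: (genKI _ (idealI_annihB idI eI DH_KH)) => // b KIb.
by split; [apply: KI_I | move=> h' KHh'; apply: KIKH].
Qed.

End HopfPairing.

Theorem lemma2p1 (k : fieldType) (B H : algType k)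
  (DB : B -> tensor2 B B) (eB : B -> k) (DH : H -> tensor2 H H) (eH : H -> k)
  (pair : B -> H -> k) :
  is_bialgebra DB eB -> is_bialgebra DH eH ->
  is_hopf_pairing DB eB DH eH pair ->
  (* (i) *)
  (forall (I : B -> Prop) (KH : H -> Prop),
     is_coideal DB eB I -> algebra_generators KH ->
     (forall i h, I i -> KH h -> pair i h = 0) ->
     forall i h, I i -> pair i h = 0) /\
  (* (ii) *)
  (forall (I KI : B -> Prop) (KH : H -> Prop),
     is_biideal DB eB I -> ideal_generators KI I -> algebra_generators KH ->
     (forall i h, KI i -> KH h -> pair i h = 0) ->
     (forall h, KH h -> in_H_span_H (fun x => KH x \/ x = 1) (Delta2 DH h)) ->
     forall i h, I i -> pair i h = 0).
Proof.
move=> _ _ pairing; split.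
- exact: coideal_pair_eq0 pairing.
- exact: biideal_pair_eq0 pairing.
Qed.
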